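(* Let $K$ be an imaginary quadratic field, let $N=N_0N_1^2$ and $c$ be positive integers with $(c,N)=1$, and fix an embedding $K\hookrightarrow M_2(\mathbb{Q})$ with $K\cap M_2(\mathbb{Z})=K\cap R_0(N_0)=\mathcal{O}_c$. Let $h_0\in K$ be the point of the upper half plane fixed by $K^\times$. Let $\mathfrak{a}=\mathbb{Z}+\mathbb{Z}h_0^{-1}$ and $\mathcal{N}^{-1}=\mathbb{Z}+\mathbb{Z}N_0^{-1}h_0^{-1}$. Then $\mathrm{End}(\mathfrak{a}):=\{x\in K: x\mathfrak{a}\subset\mathfrak{a}\}=\mathcal{O}_c$ and $\mathrm{End}(\mathcal{N}^{-1})=\mathcal{O}_c$.
   Context: $\mathcal{O}_c=\mathbb{Z}+c\mathcal{O}_K$; $R_0(N_0)=\{A\in M_2(\mathbb{Z}): A\equiv\begin{pmatrix}*&*\\0&*\end{pmatrix}\pmod{N_0}\}$. Here $h_0$ lies in $K$ (viewed as a subfield of $\mathbb{C}$) and $K=\mathbb{Q}+\mathbb{Q}h_0$. *)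

From HB Require Import structures.
From mathcomp Require Import all_boot all_order all_algebra all_field.
Set Implicit Arguments. Unset Strict Implicit. Unset Printing Implicit Defensive.
Import Order.TTheory GRing.Theory Num.Theory.
Local Open Scope ring_scope.

(* The imaginary quadratic field K = Q(w) = Q + Q w, where w^2 = -D with D > 0
   rational; membership predicate on algC. *)
Definition inK (w : algC) (x : algC) : Prop :=
  exists a b : rat, x = ratr a + ratr b * w.

Definition inOK (w : algC) (x : algC) : Prop := inK w x /\ x \in Aint.

Definition inOc (w : algC) (c : nat) (x : algC) : Prop :=
  exists (m : int) (y : algC), inOK w y /\ x = m%:~R + c%:R * y.

(* iota : K -> M_2(Q) is a ring embedding (unital, additive, multiplicative on K;
   Q-linearity and injectivity follow since K is a field). *)
Definition is_embedding (w : algC) (iota : algC -> 'M[rat]_2) : Prop :=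
  iota 1 = 1%:M /\
  (forall x y, inK w x -> inK w y -> iota (x + y) = iota x + iota y) /\
  (forall x y, inK w x -> inK w y -> iota (x * y) = iota x *m iota y).

Definition mxa (g : 'M[rat]_2) := g ord0 ord0.
Definition mxb (g : 'M[rat]_2) := g ord0 ord_max.
Definition mxc (g : 'M[rat]_2) := g ord_max ord0.
Definition mxd (g : 'M[rat]_2) := g ord_max ord_max.

Definition moebius_fixes (g : 'M[rat]_2) (z : algC) : Prop :=
  ratr (mxc g) * z + ratr (mxd g) != 0 /\
  (ratr (mxa g) * z + ratr (mxb g)) / (ratr (mxc g) * z + ratr (mxd g)) = z.

Definition int_mx (g : 'M[rat]_2) : Prop := forall i j, g i j \is a Num.int.
Definition inR0 (N0 : nat) (g : 'M[rat]_2) : Prop :=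
  int_mx g /\ exists k : int, mxc g = (N0%:Z * k)%:~R.

(* The lattices  a = Z + Z h^{-1}  and  N^{-1} = Z + Z N0^{-1} h^{-1}. *)
Definition in_lat (u v : algC) (x : algC) : Prop :=
  exists m n : int, x = m%:~R * u + n%:~R * v.

Definition inEnd (w : algC) (L : algC -> Prop) (x : algC) : Prop :=
  inK w x /\ forall y, L y -> L (x * y).

From HB Require Import structures.
From mathcomp Require Import all_boot all_order all_algebra all_field.
From mathcomp Require Import ring lra.
Import Order.TTheory GRing.Theory Num.Theory.
Set Implicit Arguments. Unset Strict Implicit.
Local Open Scope ring_scope.

(* Write h0 = p + q w. Since iota w fixes h0 and squares to -D, it equals
   (e / q) [[p, -n], [1, -p]] with e = 1 or -1 and n = p^2 + q^2 D the norm of h0.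
   Hence for x = r + s w and t = s / q, iota x is integral iff t n, r + t p,
   r - t p and t are integers. On the other hand h0^-1 = (p - q w) / n, so x
   stabilises Z + Z (N h0)^-1 iff t n N, r + t p, r - t p and t / N are integers.
   For N = 1 the two conditions coincide, which gives End(a) = O_c. For N = N0,
   an element of O_c satisfies them because the lower-left entry t of iota x is
   divisible by N0 (R_0(N0)); conversely such an x is an algebraic integer with
   N0 x in O_c, and (c, N0) = 1 puts x itself in O_c. *)

(* Stabiliser conditions for x = r + s w and the lattice Z + Z (N h)^-1, where
   h = p + q w has norm n and t = s / q. *)
Definition end_lat_cond (p n N r t : rat) : Prop :=
  [/\ t * n * N \is a Num.int, r + t * p \is a Num.int,
      r - t * p \is a Num.int & t / N \is a Num.int].

Lemma inEnd_lat1P (w u x : algC) :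
  inEnd w (in_lat 1 u) x <-> inK w x /\ in_lat 1 u x /\ in_lat 1 u (x * u).
Proof.
split=> [[xK xL] | [xK [[m1 [k1 E1]] [m2 [k2 E2]]]]].
  do 2!split=> //; last by apply: xL; exists 0, 1; rewrite mul0r mul1r add0r.
  by rewrite -[x]mulr1; apply: xL; exists 1, 0; rewrite mul1r mul0r addr0.
split=> // y [m [k ->]]; exists (m * m1 + k * m2), (m * k1 + k * k2).
have -> : x * (m%:~R * 1 + k%:~R * u) = m%:~R * x + k%:~R * (x * u) by ring.
by rewrite {1}E1 E2 !rmorphD !rmorphM /=; ring.
Qed.

Section QuadraticField.

Variables (D : rat) (w : algC).
Hypotheses (hD : 0 < D) (hw : w ^+ 2 = - ratr D).

Lemma Kcoord_eq0 (a b : rat) : ratr a + ratr b * w = 0 -> a = 0 /\ b = 0.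
Proof.
move=> coordE.
have b0 : b = 0.
  case: (eqVneq b 0) => // nb; exfalso.
  have w_rat : w = ratr (- a / b).
    have nbC : ratr b != 0 :> algC by rewrite fmorph_eq0.
    have bw : ratr b * w = - ratr a by rewrite -[ratr b * w](addKr (ratr a)) coordE addr0.
    by rewrite -[w](mulKf nbC) bw rmorphM rmorphN fmorphV /= mulrC.
  move: hw; rewrite w_rat -rmorphXn => /eqP; rewrite -rmorphN (inj_eq (fmorph_inj _)).
  by move=> /eqP sqE; have := sqr_ge0 (- a / b); rewrite sqE oppr_ge0 leNgt hD.
split=> //; move: coordE; rewrite b0 CratrE mul0r addr0 => /eqP.
by rewrite fmorph_eq0 => /eqP.
Qed.

Lemma Kcoord_inj (a b a' b' : rat) :
  ratr a + ratr b * w = ratr a' + ratr b' * w -> a = a' /\ b = b'.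
Proof.
move=> coordE; have [] : a - a' = 0 /\ b - b' = 0.
  by apply: Kcoord_eq0; rewrite !rmorphB /= mulrBl addrACA coordE -addrACA !subrr addr0.
by move=> /eqP; rewrite subr_eq0 => /eqP -> /eqP; rewrite subr_eq0 => /eqP ->.
Qed.

Lemma mul_Kcoord (a b a' b' : rat) :
  (ratr a + ratr b * w) * (ratr a' + ratr b' * w) =
  ratr (a * a' - b * b' * D) + ratr (a * b' + b * a') * w.
Proof.
have hD' : ratr D = - w ^+ 2 by rewrite hw opprK.
by rewrite !CratrE /= hD'; ring.
Qed.

Lemma gen_neq0 : w != 0.
Proof.
apply: contraTneq hD => w0; move: hw; rewrite w0 expr0n /= => /esym/eqP.
by rewrite oppr_eq0 fmorph_eq0 => /eqP ->; rewrite ltxx.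
Qed.

Lemma normK_gt0 (p q : rat) : q != 0 -> 0 < p ^+ 2 + q ^+ 2 * D.
Proof.
move=> nq; apply: ltr_wpDl; first exact: sqr_ge0.
by rewrite pmulr_rgt0 // lt_def sqr_ge0 expf_neq0.
Qed.

Lemma Kcoord_inv (p q N : rat) : q != 0 -> N != 0 ->
  ratr N^-1 * (ratr p + ratr q * w)^-1 =
  ratr (p / ((p ^+ 2 + q ^+ 2 * D) * N)) + ratr (- q / ((p ^+ 2 + q ^+ 2 * D) * N)) * w.
Proof.
move=> nq nN; have nn := gt_eqF (normK_gt0 p nq).
have nh : ratr p + ratr q * w != 0.
  by apply: contraNneq nq => /Kcoord_eq0 [_ ->].
apply: (mulfI nh); rewrite mulrCA mulfV // mulr1 mul_Kcoord.
have -> : p * (p / ((p ^+ 2 + q ^+ 2 * D) * N)) - q * (- q / ((p ^+ 2 + q ^+ 2 * D) * N)) * D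
    = N^-1 by field; rewrite nN nn.
have -> : p * (- q / ((p ^+ 2 + q ^+ 2 * D) * N)) + q * (p / ((p ^+ 2 + q ^+ 2 * D) * N)) = 0
    by field; rewrite nN nn.
by rewrite rmorph0 mul0r addr0.
Qed.

Lemma in_lat_Kcoord (a b : rat) (nb : b != 0) (r s : rat) :
  in_lat 1 (ratr a + ratr b * w) (ratr r + ratr s * w) <->
  s / b \is a Num.int /\ r - a * (s / b) \is a Num.int.
Proof.
have nbC : ratr b != 0 :> algC by rewrite fmorph_eq0.
split.
- case=> m [k latE].
  have : ratr r + ratr s * w = ratr (m%:~R + k%:~R * a) + ratr (k%:~R * b) * w.
    by rewrite latE !CratrE /= ?rmorph_int; ring.
  case/Kcoord_inj => -> ->.
  by rewrite mulfK // (mulrC a) addrK !intr_int.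
- case=> /intrP [k Hk] /intrP [m Hm].
  exists m, k; rewrite -(rmorph_int ratr m) -(rmorph_int ratr k) -Hk -Hm !CratrE /=.
  by field.
Qed.

Lemma inEnd_lat_Kcoord (p q : rat) (N : nat) (r s : rat) : q != 0 -> (0 < N)%N ->
  inEnd w (in_lat 1 (N%:R^-1 * (ratr p + ratr q * w)^-1)) (ratr r + ratr s * w) <->
  end_lat_cond p (p ^+ 2 + q ^+ 2 * D) N%:R r (s / q).
Proof.
move=> nq N_gt0; have nN : N%:R != 0 :> rat by rewrite pnatr_eq0 -lt0n.
rewrite -[N%:R](rmorph_nat (@ratr algC)) -fmorphV Kcoord_inv //.
set n := p ^+ 2 + q ^+ 2 * D; have nn : n != 0 by rewrite gt_eqF ?normK_gt0.
set a := p / (n * N%:R); set b := - q / (n * N%:R).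
have nb : b != 0 by rewrite /b mulf_neq0 ?oppr_eq0 ?invr_eq0 ?mulf_neq0.
rewrite inEnd_lat1P mul_Kcoord !(in_lat_Kcoord _ nb).
have -> : s / b = - (s / q * n * N%:R) by rewrite /b; field; rewrite nq nn nN.
have -> : r - a * - (s / q * n * N%:R) = r + s / q * p by rewrite /a; field; rewrite nq nn nN.
have -> : (r * b + s * a) / b = r - s / q * p by rewrite /a /b; field; rewrite nq nn nN.
have -> : r * a - s * b * D - a * (r - s / q * p) = s / q / N%:R.
  by rewrite /a /b /n; field; rewrite nq nN -/n nn.
rewrite rpredN; split=> [[_ [[? ?] [? ?]]] | [? ? ? ?]]; first by split.
by split; [exists r, s | split].
Qed.

End QuadraticField.

Lemma natr_mul_Kcoord (w : algC) (m : nat) (r s : rat) :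
  m%:R * (ratr r + ratr s * w) = ratr (m%:R * r) + ratr (m%:R * s) * w.
Proof. by rewrite !rmorphM /= rmorph_nat mulrDr mulrA. Qed.

Lemma q_neq0_of_Im_gt0 (w : algC) (p q : rat) : 0 < 'Im (ratr p + ratr q * w) -> q != 0.
Proof.
apply: contraTneq => ->; rewrite CratrE mul0r addr0.
by rewrite (Creal_ImP _ (Creal_Crat (Crat_rat p))) ltxx.
Qed.

Lemma inK_Kcoord (w : algC) (r s : rat) : inK w (ratr r + ratr s * w).
Proof. by exists r, s. Qed.

Lemma inK_ratr (w : algC) (r : rat) : inK w (ratr r).
Proof. by exists r, 0; rewrite CratrE mul0r addr0. Qed.

Lemma inK_gen (w : algC) : inK w w.
Proof. by exists 0, 1; rewrite !CratrE add0r mul1r. Qed.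

Lemma inK_onto (w : algC) (P Q : algC -> Prop) :
  (forall x, P x -> inK w x) -> (forall x, Q x -> inK w x) ->
  (forall r s, P (ratr r + ratr s * w) <-> Q (ratr r + ratr s * w)) ->
  forall x, P x <-> Q x.
Proof.
move=> PK QK PQ x; split=> [Px | Qx].
  by have [r [s xE]] := PK x Px; rewrite xE -PQ -xE.
by have [r [s xE]] := QK x Qx; rewrite xE PQ -xE.
Qed.

Section Embedding.

Variables (w : algC) (iota : algC -> 'M[rat]_2).
Hypothesis hiota : is_embedding w iota.

Lemma iota0 : iota 0 = 0.
Proof.
have [_ [iotaD _]] := hiota.
have K0 : inK w 0 by rewrite -(rmorph0 (@ratr algC)); apply: inK_ratr.
have := iotaD 0 0 K0 K0; rewrite addr0.
by move/(congr1 (fun M => M - iota 0)); rewrite subrr addrK.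
Qed.

Lemma iota_nat (k : nat) : iota k%:R = k%:R%:M.
Proof.
have [iota1 [iotaD _]] := hiota.
elim: k => [|k IHk]; first by rewrite iota0 raddf0.
have Kk : inK w k%:R by rewrite -(rmorph_nat (@ratr algC)); apply: inK_ratr.
have K1 : inK w 1 by rewrite -(rmorph1 (@ratr algC)); apply: inK_ratr.
by rewrite -[in LHS]natr1 iotaD // IHk iota1 -natr1 raddfD.
Qed.

Lemma iota_int (z : int) : iota z%:~R = z%:~R%:M.
Proof.
have [_ [iotaD _]] := hiota.
case: z => k; first exact: iota_nat.
rewrite NegzE !mulrNz -!pmulrn; set m := k.+1.
have Km : inK w m%:R by rewrite -(rmorph_nat (@ratr algC)); apply: inK_ratr.
have KNm : inK w (- m%:R) by rewrite -(rmorph_nat (@ratr algC)) -rmorphN; apply: inK_ratr.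
have := iotaD _ _ KNm Km; rewrite addNr iota0 iota_nat => /esym/eqP.
by rewrite addr_eq0 => /eqP ->; rewrite raddfN.
Qed.

Lemma iota_ratr (r : rat) : iota (ratr r) = r%:M.
Proof.
have [_ [_ iotaM]] := hiota.
rewrite -[r]divq_num_den; set m := numq r; set d := denq r.
have nd : d%:~R != 0 :> rat by rewrite intr_eq0 denq_neq0.
have Kd : inK w d%:~R by rewrite -(rmorph_int (@ratr algC)); apply: inK_ratr.
have := iotaM _ _ Kd (inK_ratr w (m%:~R / d%:~R)).
rewrite -[X in iota (X * _)](rmorph_int (@ratr algC)) -rmorphM /= mulrC divfK //.
rewrite rmorph_int !iota_int => dE.
by rewrite [in RHS]mulrC scalar_mxM dE mulmxA -scalar_mxM mulVf // mul1mx.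
Qed.

Lemma iota_Kcoord (r s : rat) : iota (ratr r + ratr s * w) = r%:M + s *: iota w.
Proof.
have [_ [iotaD iotaM]] := hiota.
have Ksw : inK w (ratr s * w) by exists 0, s; rewrite CratrE add0r.
rewrite (iotaD _ _ (inK_ratr w r) Ksw) (iotaM _ _ (inK_ratr w s) (inK_gen w)).
by rewrite !iota_ratr mul_scalar_mx.
Qed.

Lemma iota_gen_sqr (D : rat) : w ^+ 2 = - ratr D -> iota w *m iota w = (- D)%:M.
Proof.
have [_ [_ iotaM]] := hiota.
by move=> hw; rewrite -(iotaM _ _ (inK_gen w) (inK_gen w)) -expr2 hw -rmorphN iota_ratr.
Qed.

End Embedding.

Lemma ord2_cases (i : 'I_2) : i = ord0 \/ i = ord_max.
Proof. by case: i => [[|[|]]] //= lti; [left | right]; apply/val_inj. Qed.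

Lemma int_mxP (g : 'M[rat]_2) : int_mx g <->
  [/\ mxa g \is a Num.int, mxb g \is a Num.int, mxc g \is a Num.int & mxd g \is a Num.int].
Proof.
split=> [gZ | [aZ bZ cZ dZ] i j]; first by split; apply: gZ.
by case: (ord2_cases i) => ->; case: (ord2_cases j) => ->.
Qed.

Lemma lift0_ord0 : lift ord0 ord0 = ord_max :> 'I_2.
Proof. exact: val_inj. Qed.

Lemma mxc_mul (A B : 'M[rat]_2) : mxc (A *m B) = mxc A * mxa B + mxd A * mxc B.
Proof. by rewrite /mxa /mxc /mxd mxE !big_ord_recl big_ord0 addr0 lift0_ord0. Qed.

Lemma mxd_mul (A B : 'M[rat]_2) : mxd (A *m B) = mxc A * mxb B + mxd A * mxd B.
Proof. by rewrite /mxb /mxc /mxd mxE !big_ord_recl big_ord0 addr0 lift0_ord0. Qed.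

Lemma entries_scalar_mx (r : rat) :
  [/\ mxa (r%:M : 'M_2) = r, mxb (r%:M : 'M_2) = 0, mxc (r%:M : 'M_2) = 0 & mxd (r%:M : 'M_2) = r].
Proof. by split; rewrite /mxa /mxb /mxc /mxd !mxE /= ?mulr1n ?mulr0n. Qed.

Lemma entries_scalar_addZ (r s : rat) (A : 'M[rat]_2) :
  [/\ mxa (r%:M + s *: A) = r + s * mxa A, mxb (r%:M + s *: A) = s * mxb A,
      mxc (r%:M + s *: A) = s * mxc A & mxd (r%:M + s *: A) = r + s * mxd A].
Proof. by split; rewrite /mxa /mxb /mxc /mxd !mxE /= ?mulr1n ?mulr0n ?add0r. Qed.

Lemma int_signl (e x : rat) : e = 1 \/ e = -1 -> (e * x \is a Num.int) = (x \is a Num.int).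
Proof. by case=> ->; rewrite ?mul1r ?mulN1r ?rpredN. Qed.

Lemma Aint_of_quadratic (x : algC) (t m : rat) : t \is a Num.int -> m \is a Num.int ->
  x ^+ 2 - ratr t * x + ratr m = 0 -> x \in Aint.
Proof.
move=> /intrP [t' ->] /intrP [m' ->] root_x.
pose P : {poly algC} := 'X^2 + ((- t'%:~R)%:P * 'X + (m'%:~R)%:P).
apply: (@root_monic_Aint P).
- by rewrite /root /P !hornerE -root_x !rmorph_int /= mulNr.
- rewrite monicE /P lead_coefDl ?lead_coefXn // size_polyXn size_MXaddC.
  by case: ifP => // _; rewrite ltnS ltnS size_polyC_leq1.
- apply/polyOverP => i; rewrite /P !(coefD, coefXn, coefMX, coefC).
  by case: i => [|[|[|i]]] /=; rewrite ?add0r ?addr0 ?rpredN ?intr_int ?int_num0 ?int_num1.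
Qed.

Lemma end_lat_cond_scale (p n r t : rat) (N : nat) :
  end_lat_cond p n N%:R r t -> end_lat_cond p n 1 (N%:R * r) (N%:R * t).
Proof.
case=> nZ plusZ minusZ divZ; have NZ : (N%:R : rat) \is a Num.int by exact: natr_int.
split; first by have -> : N%:R * t * n * 1 = t * n * N%:R by ring.
- by rewrite -mulrA -mulrDr rpredM.
- by rewrite -mulrA -mulrBr rpredM.
have [-> | N_gt0] := posnP N; first by rewrite !mul0r rpred0.
have -> : N%:R * t / 1 = N%:R * N%:R * (t / N%:R).
  by field; rewrite pnatr_eq0 -lt0n.
by apply: rpredM => //; apply: rpredM.
Qed.

Lemma end_lat_cond_div (p n r t : rat) (N : nat) :
  end_lat_cond p n 1 r t -> t / N%:R \is a Num.int -> end_lat_cond p n N%:R r t.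
Proof.
rewrite /end_lat_cond mulr1 => -[nZ plusZ minusZ _] divZ.
by split=> //; rewrite rpredM ?natr_int.
Qed.

Section FixedPoint.

Variables (D : rat) (w : algC) (iota : algC -> 'M[rat]_2) (p q : rat).
Hypotheses (hD : 0 < D) (hw : w ^+ 2 = - ratr D) (hiota : is_embedding w iota) (nq : q != 0).
Hypothesis hfix : moebius_fixes (iota w) (ratr p + ratr q * w).

Local Notation n := (p ^+ 2 + q ^+ 2 * D).

Lemma moebius_fixes_Kcoord (g : 'M[rat]_2) : moebius_fixes g (ratr p + ratr q * w) ->
  mxa g * p + mxb g - mxc g * (p ^+ 2 - q ^+ 2 * D) - mxd g * p = 0 /\
  mxa g * q - 2 * mxc g * p * q - mxd g * q = 0.
Proof.
set z := ratr p + ratr q * w; case=> nden fixE.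
have : ratr (mxa g) * z + ratr (mxb g) - z * (ratr (mxc g) * z + ratr (mxd g)) = 0.
  by rewrite -{1}(divfK nden (ratr (mxa g) * z + ratr (mxb g))) fixE mulrC subrr.
have hD' : ratr D = - w ^+ 2 by rewrite hw opprK.
move=> fixE'; apply: (Kcoord_eq0 hD hw); rewrite -fixE' /z !CratrE /= hD'; ring.
Qed.

(* From iota w ^ 2 = -D: the lower-left entry c is nonzero and the trace vanishes;
   the fixed-point equation c h^2 + (d - a) h - b = 0 at h = p + q w then gives
   a = c p, b = -c n, and finally c^2 q^2 = 1. *)
Lemma iota_gen_entries : exists2 e : rat, e = 1 \/ e = -1 &
  [/\ mxa (iota w) = e / q * p, mxb (iota w) = - (e / q * n),
      mxc (iota w) = e / q & mxd (iota w) = - (e / q * p)].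
Proof.
have [fix1 fix2] := moebius_fixes_Kcoord hfix.
have sqr := iota_gen_sqr hiota hw.
have [_ _ cD dD] := entries_scalar_mx (- D).
move: (mxc_mul (iota w) (iota w)) (mxd_mul (iota w) (iota w)) fix1 fix2.
rewrite sqr cD dD.
set a := mxa _; set b := mxb _; set c := mxc _; set d := mxd _ => ca cb fix1 fix2.
have nc : c != 0.
  apply/eqP => c0; move: cb; rewrite c0 mul0r add0r => dd.
  by have := sqr_ge0 d; rewrite expr2 -dd oppr_ge0 leNgt hD.
have ad : a = - d.
  by move/eqP: ca; rewrite eq_sym (mulrC d) -mulrDr mulf_eq0 (negbTE nc) addr_eq0 => /eqP.
have dE : d = - c * p.
  have : q * (a - 2 * c * p - d) = 0 by rewrite -fix2; ring.
  by move/eqP; rewrite mulf_eq0 (negbTE nq) /= ad => /eqP; lra.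
have bE : b = - (c * n) by move: fix1; rewrite ad dE; nra.
have cq2 : (c * q) ^+ 2 = 1.
  have : D * ((c * q) ^+ 2 - 1) = 0 by move: cb; rewrite bE dE; nra.
  by move/eqP; rewrite mulf_eq0 gt_eqF //= subr_eq0 => /eqP.
exists (c * q); first by move/eqP: cq2; rewrite sqrf_eq1 => /orP [] /eqP; [left | right].
by rewrite mulfK //; split; rewrite ?ad ?dE ?bE; ring.
Qed.

Lemma iota_Kcoord_entries (r s : rat) : exists2 e : rat, e = 1 \/ e = -1 &
  [/\ mxa (iota (ratr r + ratr s * w)) = r + e * (s / q * p),
      mxb (iota (ratr r + ratr s * w)) = - (e * (s / q * n)),
      mxc (iota (ratr r + ratr s * w)) = e * (s / q) &
      mxd (iota (ratr r + ratr s * w)) = r - e * (s / q * p)].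
Proof.
have [e e_sign [aE bE cE dE]] := iota_gen_entries.
exists e => //; rewrite (iota_Kcoord hiota).
by have [-> -> -> ->] := entries_scalar_addZ r s (iota w); rewrite aE bE cE dE; split; ring.
Qed.

Lemma int_mx_iota_Kcoord (r s : rat) :
  int_mx (iota (ratr r + ratr s * w)) <-> end_lat_cond p n 1 r (s / q).
Proof.
rewrite int_mxP; have [e e_sign [-> -> -> ->]] := iota_Kcoord_entries r s.
rewrite /end_lat_cond mulr1 divr1 rpredN !(int_signl _ e_sign).
by case: e_sign => ->; rewrite ?mul1r ?mulN1r ?opprK; split=> -[].
Qed.

Lemma inR0_iota_Kcoord (N : nat) (r s : rat) : (0 < N)%N ->
  inR0 N (iota (ratr r + ratr s * w)) -> s / q / N%:R \is a Num.int.
Proof.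
move=> N_gt0 [_ [k]]; have [e e_sign [_ _ -> _]] := iota_Kcoord_entries r s.
have nN : N%:R != 0 :> rat by rewrite pnatr_eq0 -lt0n.
rewrite rmorphM /= -pmulrn => cE.
have -> : s / q / N%:R = e * (e * (s / q)) / N%:R.
  by case: e_sign => ->; rewrite ?mul1r ?mulN1r ?opprK.
by rewrite cE mulrCA mulrAC divff // mul1r rpredM ?intr_int //; case: e_sign => ->; rewrite ?rpredN.
Qed.

Lemma end_lat_cond_Aint (N r s : rat) : N != 0 ->
  end_lat_cond p n N r (s / q) -> ratr r + ratr s * w \in Aint.
Proof.
move=> nN [nZ plusZ minusZ divZ].
apply: (@Aint_of_quadratic _ (2 * r) (r ^+ 2 + s ^+ 2 * D)).
- have -> : 2 * r = (r + s / q * p) + (r - s / q * p) by ring.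
  exact: rpredD.
- have -> : r ^+ 2 + s ^+ 2 * D =
      (r + s / q * p) * (r - s / q * p) + s / q / N * (s / q * n * N).
    by field; rewrite nq nN.
  by apply: rpredD; apply: rpredM.
- have hD' : ratr D = - w ^+ 2 by rewrite hw opprK.
  by rewrite !CratrE /= hD'; ring.
Qed.

End FixedPoint.

Lemma inOc_inK (w : algC) (c : nat) (x : algC) : inOc w c x -> inK w x.
Proof.
case=> m [y [[[a [b ->]] _] ->]].
by exists (m%:~R + c%:R * a), (c%:R * b); rewrite !CratrE /=; ring.
Qed.

Lemma inOK_lin (w : algC) (u v : int) (y z : algC) :
  inOK w y -> inOK w z -> inOK w (u%:~R * y + v%:~R * z).
Proof.
case=> -[a [b ->]] yA [[a' [b' ->]] zA]; split; last first.
  by rewrite rpredD // rpredM // Aint_int.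
exists (u%:~R * a + v%:~R * a'), (u%:~R * b + v%:~R * b'); rewrite !CratrE /=; ring.
Qed.

Lemma inOc_of_coprime_mul (w : algC) (c m : nat) (x : algC) : coprime c m ->
  inOK w x -> inOc w c (m%:R * x) -> inOc w c x.
Proof.
move=> cop xOK [k [y [yOK mxE]]].
have [u [v uvE]] := Bezoutz m%:Z c%:Z.
have bez : u%:~R * m%:R + v%:~R * c%:R = 1 :> algC.
  have : gcdz m%:Z c%:Z = 1%N by apply/eqP; rewrite coprime_sym in cop.
  by move: uvE => /(congr1 (fun z : int => z%:~R : algC)); rewrite !rmorphD !rmorphM /= => -> ->.
exists (u * k), (u%:~R * y + v%:~R * x); split; first exact: inOK_lin.
transitivity ((u%:~R * m%:R + v%:~R * c%:R) * x); first by rewrite bez mul1r.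
by rewrite mulrDl -mulrA mxE rmorphM /=; ring.
Qed.

Theorem lemma2p4
  (D : rat) (hD : 0 < D) (w : algC) (hw : w ^+ 2 = - ratr D)
  (N0 N1 c : nat) (hN0 : (0 < N0)%N) (hN1 : (0 < N1)%N) (hc : (0 < c)%N)
  (hcN : coprime c (N0 * N1 ^ 2))
  (iota : algC -> 'M[rat]_2) (hiota : is_embedding w iota)
  (hZ : forall x, inK w x -> (int_mx (iota x) <-> inOc w c x))
  (hR0 : forall x, inK w x -> (inR0 N0 (iota x) <-> inOc w c x))
  (h0 : algC) (hh0K : inK w h0) (hh0 : 0 < 'Im h0)
  (hfix : forall x, inK w x -> x != 0 -> moebius_fixes (iota x) h0) :
  (forall x, inEnd w (in_lat 1 h0^-1) x <-> inOc w c x) /\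
  (forall x, inEnd w (in_lat 1 (N0%:R^-1 * h0^-1)) x <-> inOc w c x).
Proof.
case: hh0K => p [q h0E]; rewrite {}h0E in hh0 hfix *.
have nq := q_neq0_of_Im_gt0 hh0.
have hfw := hfix w (inK_gen w) (gen_neq0 hD hw).
have int_iota := int_mx_iota_Kcoord hD hw hiota nq hfw.
have cN0 : coprime c N0 by move: hcN; rewrite coprimeMr => /andP [].
split; apply: (inK_onto (w := w)) => [x [] // | x /inOc_inK // | r s].
- have := inEnd_lat_Kcoord hD hw p (N := 1) r s nq isT.
  rewrite !mulr1n invr1 mul1r => ->.
  by rewrite -int_iota; apply: hZ; apply: inK_Kcoord.
- have xK := inK_Kcoord w r s.
  rewrite (inEnd_lat_Kcoord hD hw) //; split=> [cond | xOc].
  + apply: (inOc_of_coprime_mul cN0).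
      by split=> //; apply: (end_lat_cond_Aint hw nq _ cond); rewrite pnatr_eq0 -lt0n.
    rewrite natr_mul_Kcoord; apply/(hZ _ (inK_Kcoord _ _ _))/int_iota.
    by rewrite -mulrA; apply: end_lat_cond_scale.
  + apply: end_lat_cond_div; first exact/int_iota/(hZ _ xK).
    exact/(inR0_iota_Kcoord hD hw hiota nq hfw hN0)/(hR0 _ xK).
Qed.
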